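(* Let $P=P(x,y)$ be a quasi-polynomial in two noncommuting variables $x,y$ whose coefficients are polynomials in the entries $x_{ij},y_{ij}$ ($1\le i,j\le 2$). If $P$ is a quasi-identity of $M_2$, then $P$ is a consequence of the Cayley–Hamilton identity, i.e. $P$ lies in the T-ideal generated by $Q_2$.
   Context: $F$ is a field of characteristic $0$, $M_2=M_2(F)$. Quasi-polynomials in $x,y$ are elements of the free algebra on $x,y$ over $F[x_{ij},y_{ij}]$; $P$ is a quasi-identity of $M_2$ if $P(A,B)=0$ for all $A=(a_{ij}),B=(b_{ij})\in M_2$, substituting $A,B$ for $x,y$ and $a_{ij},b_{ij}$ for $x_{ij},y_{ij}$. Let $\xi,\eta$ be the generic matrices $(x_{ij}),(y_{ij})$, and for monomials $\mathrm{tr}(\cdot)$ denote the trace of the corresponding product of generic matrices. $Q_2(x_1,x_2)=x_1x_2+x_2x_1-\mathrm{tr}(x_1)x_2-\mathrm{tr}(x_2)x_1+\mathrm{tr}(x_1)\mathrm{tr}(x_2)-\mathrm{tr}(x_1x_2)$. A T-ideal is an ideal (of the quasi-polynomial algebra in arbitrarily many variables) closed under simultaneous substitutions of variables $x_k\mapsto H_k$ and of their entry-variables $x^{(k)}_{ij}\mapsto$ the $(i,j)$-entry of the matrix obtained from $H_k$ by replacing variables with generic matrices. *)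

From HB Require Import structures.
From mathcomp Require Import all_boot all_order all_algebra.
Set Implicit Arguments. Unset Strict Implicit. Unset Printing Implicit Defensive.
Import Order.TTheory GRing.Theory Num.Theory.
Local Open Scope ring_scope.

(* Syntax of quasi-polynomials in countably many noncommuting variables x_k
   (k : nat), with coefficients polynomials (over F) in the commuting
   central variables x^{(k)}_{ij}, 0 <= i,j < 2. *)
Inductive qterm (F : Type) : Type :=
| QVar : nat -> qterm F
| QEnt : nat -> 'I_2 -> 'I_2 -> qterm F
| QConst : F -> qterm F
| QAdd : qterm F -> qterm F -> qterm F
| QMul : qterm F -> qterm F -> qterm F.

Arguments QVar {F}.
Arguments QEnt {F}.

Section QP.
Variable F : fieldType.

Definition QSub (p q : qterm F) := QAdd p (QMul (QConst (-1)) q).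

(* Equality in the quasi-polynomial algebra F[x^{(k)}_{ij}]<x_k>: the
   congruence generated by the axioms of an associative unital F-algebra in
   which the x^{(k)}_{ij} (and the scalars) are central. *)
Inductive qeq : qterm F -> qterm F -> Prop :=
| qeq_refl p : qeq p p
| qeq_sym p q : qeq p q -> qeq q p
| qeq_trans p q r : qeq p q -> qeq q r -> qeq p r
| qeq_add p p' q q' : qeq p p' -> qeq q q' -> qeq (QAdd p q) (QAdd p' q')
| qeq_mul p p' q q' : qeq p p' -> qeq q q' -> qeq (QMul p q) (QMul p' q')
| qeq_addA p q r : qeq (QAdd p (QAdd q r)) (QAdd (QAdd p q) r)
| qeq_addC p q : qeq (QAdd p q) (QAdd q p)
| qeq_add0 p : qeq (QAdd (QConst 0) p) p
| qeq_mulA p q r : qeq (QMul p (QMul q r)) (QMul (QMul p q) r)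
| qeq_mul1l p : qeq (QMul (QConst 1) p) p
| qeq_mul1r p : qeq (QMul p (QConst 1)) p
| qeq_mul0 p : qeq (QMul (QConst 0) p) (QConst 0)
| qeq_mulDl p q r : qeq (QMul (QAdd p q) r) (QAdd (QMul p r) (QMul q r))
| qeq_mulDr p q r : qeq (QMul r (QAdd p q)) (QAdd (QMul r p) (QMul r q))
| qeq_constD a b : qeq (QConst (a + b)) (QAdd (QConst a) (QConst b))
| qeq_constM a b : qeq (QConst (a * b)) (QMul (QConst a) (QConst b))
| qeq_constC a p : qeq (QMul (QConst a) p) (QMul p (QConst a))
| qeq_entC k i j p : qeq (QMul (QEnt k i j) p) (QMul p (QEnt k i j)).

(* Replacing every variable x_l by the generic matrix (x^{(l)}_{ij}):
   a 2x2 matrix whose entries are (central) quasi-polynomials. *)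
Definition gmat := 'I_2 -> 'I_2 -> qterm F.

Fixpoint gen (t : qterm F) : gmat :=
  match t with
  | QVar l => fun i j => QEnt l i j
  | QEnt l a b => fun i j => if i == j then QEnt l a b else QConst 0
  | QConst c => fun i j => if i == j then QConst c else QConst 0
  | QAdd p q => fun i j => QAdd (gen p i j) (gen q i j)
  | QMul p q => fun i j =>
      QAdd (QMul (gen p i ord0) (gen q ord0 j))
           (QMul (gen p i (@Ordinal 2 1 isT)) (gen q (@Ordinal 2 1 isT) j))
  end.

Definition qtr (t : qterm F) : qterm F :=
  QAdd (gen t ord0 ord0) (gen t (@Ordinal 2 1 isT) (@Ordinal 2 1 isT)).

Fixpoint qsubst (H : nat -> qterm F) (t : qterm F) : qterm F :=
  match t with
  | QVar k => H k
  | QEnt k i j => gen (H k) i j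
  | QConst c => QConst c
  | QAdd p q => QAdd (qsubst H p) (qsubst H q)
  | QMul p q => QMul (qsubst H p) (qsubst H q)
  end.

(* Q_2(x_1, x_2) with x_1 = QVar 0, x_2 = QVar 1. *)
Definition Q2 : qterm F :=
  let x1 := QVar 0 in let x2 := QVar 1 in
  QSub (QAdd (QSub (QSub (QAdd (QMul x1 x2) (QMul x2 x1))
                         (QMul (qtr x1) x2))
                   (QMul (qtr x2) x1))
             (QMul (qtr x1) (qtr x2)))
       (qtr (QMul x1 x2)).

Inductive inTideal_Q2 : qterm F -> Prop :=
| TI_gen : inTideal_Q2 Q2
| TI_add p q : inTideal_Q2 p -> inTideal_Q2 q -> inTideal_Q2 (QAdd p q)
| TI_mull a p : inTideal_Q2 p -> inTideal_Q2 (QMul a p)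
| TI_mulr a p : inTideal_Q2 p -> inTideal_Q2 (QMul p a)
| TI_eq p q : qeq p q -> inTideal_Q2 p -> inTideal_Q2 q
| TI_subst H p : inTideal_Q2 p -> inTideal_Q2 (qsubst H p).

Fixpoint qeval (rho : nat -> 'M[F]_2) (t : qterm F) : 'M[F]_2 :=
  match t with
  | QVar k => rho k
  | QEnt k i j => (rho k i j)%:M
  | QConst c => c%:M
  | QAdd p q => qeval rho p + qeval rho q
  | QMul p q => qeval rho p *m qeval rho q
  end.

Fixpoint two_var (t : qterm F) : bool :=
  match t with
  | QVar k => k < 2
  | QEnt k _ _ => k < 2
  | QConst _ => true
  | QAdd p q => two_var p && two_var q
  | QMul p q => two_var p && two_var q
  end%N.

Definition env2 (A B : 'M[F]_2) : nat -> 'M[F]_2 :=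
  fun k => if k == 0%N then A else if k == 1%N then B else 0.

Definition quasi_identity2 (P : qterm F) : Prop :=
  forall A B : 'M[F]_2, qeval (env2 A B) P = 0.

End QP.

(* Let I be the T-ideal generated by Q_2, and Q the quotient of the
   quasi-polynomial algebra by I (a ring, with x = [x_0], y = [x_1]).
   1. Every element of I vanishes under every evaluation at 2x2 matrices, so
      evaluation factors through a ring morphism Q -> M_2(F).
   2. The classes of central quasi-polynomials commute with everything in Q;
      the traces tr(t) and the entries of generic matrices are central.
   3. (Normal form, char 0.)  Instances of Cayley-Hamilton give
      z^2 = tr(z) z - det(z) (this needs 1/2) and yx = -xy + central linear
      terms, so the set {a + b x + c y + d xy | a, b, c, d central} is stable
      under left multiplication by x and y; hence it contains every
      quasi-polynomial in x, y.
   4. Central two-variable quasi-polynomials are images of commutative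
      polynomials in the 8 entry variables.  Evaluating a + b x + c y + d xy
      at two generic matrices and eliminating (1, A, B, AB are linearly
      independent on a Zariski-dense set) shows that if it is a
      quasi-identity then a, b, c, d vanish as polynomials, hence in Q.
   Combining 3 and 4, a two-variable quasi-identity P has class 0, i.e. P is
   in I. *)

From HB Require Import structures.
From mathcomp Require Import all_boot all_order all_algebra.
From mathcomp Require Import boolp ring.
From Stdlib Require Import Setoid Morphisms.
Set Implicit Arguments. Unset Strict Implicit. Unset Printing Implicit Defensive.
Import GRing.Theory.
Local Open Scope ring_scope.

Lemma big_ord2 (R : nmodType) (f : 'I_2 -> R) :
  \sum_(k < 2) f k = f ord0 + f (@Ordinal 2 1 isT).
Proof. by rewrite big_ord_recl big_ord1; congr (_ + f _); apply: val_inj. Qed.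

Lemma ord2P (i : 'I_2) : i = ord0 \/ i = @Ordinal 2 1 isT.
Proof. by case: i => [[|[|//]] h]; [left|right]; apply: val_inj. Qed.

Lemma subr_solve (V : zmodType) (u p q r w : V) :
  u - p - q + r - w = 0 -> u = p + q - r + w.
Proof. by move=> h; apply/eqP; rewrite -subr_eq0 -h !opprD opprK !addrA. Qed.

Section TIdeal.
Variable F : fieldType.
Local Notation qt := (qterm F).

Instance qeq_equiv : Equivalence (@qeq F).
Proof. split; [exact: qeq_refl|exact: qeq_sym|exact: qeq_trans]. Qed.
Instance qadd_proper : Proper (@qeq F ==> @qeq F ==> @qeq F) (@QAdd F).
Proof. by move=> ? ? ? ? ? ?; apply: qeq_add. Qed.
Instance qmul_proper : Proper (@qeq F ==> @qeq F ==> @qeq F) (@QMul F).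
Proof. by move=> ? ? ? ? ? ?; apply: qeq_mul. Qed.

Lemma qeq_subss (t : qt) : qeq (QSub t t) (QConst 0).
Proof.
rewrite /QSub -{1}(qeq_mul1l t) -qeq_mulDl -qeq_constD subrr; exact: qeq_mul0.
Qed.

Lemma qeq_sub0 (t : qt) : qeq (QSub t (QConst 0)) t.
Proof. rewrite /QSub -qeq_constM mulr0 qeq_addC qeq_add0; reflexivity. Qed.

Lemma qeq_oppK (t : qt) : qeq (QMul (QConst (-1)) (QMul (QConst (-1)) t)) t.
Proof. by rewrite qeq_mulA -qeq_constM mulrNN mulr1 qeq_mul1l; reflexivity. Qed.

Lemma qeq_constCA (c : F) (a b : qt) :
  qeq (QMul a (QMul (QConst c) b)) (QMul (QConst c) (QMul a b)).
Proof. rewrite qeq_mulA -(qeq_constC c a) -qeq_mulA; reflexivity. Qed.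

Lemma Tideal0 : inTideal_Q2 (QConst (0 : F)).
Proof. apply: (TI_eq (qeq_mul0 (Q2 F))); apply: TI_mull; exact: TI_gen. Qed.

Definition tcong (t s : qt) := inTideal_Q2 (QSub t s).

Lemma tcong0 (t : qt) : tcong t (QConst 0) <-> inTideal_Q2 t.
Proof. by split=> h; apply: TI_eq h; rewrite qeq_sub0; reflexivity. Qed.

Lemma qeq_tcong (t s : qt) : qeq t s -> tcong t s.
Proof.
move=> e; apply: TI_eq Tideal0.
by rewrite /QSub e -/(QSub s s) qeq_subss; reflexivity.
Qed.

Lemma tcong_refl (t : qt) : tcong t t.
Proof. exact/qeq_tcong/qeq_refl. Qed.

Lemma tcong_sym (t s : qt) : tcong t s -> tcong s t.
Proof.
move=> h; apply: (TI_eq _ (TI_mull (QConst (-1)) h)).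
rewrite /QSub qeq_mulDr qeq_oppK qeq_addC; reflexivity.
Qed.

Lemma tcong_trans (t s u : qt) : tcong t s -> tcong s u -> tcong t u.
Proof.
move=> h1 h2; apply: (TI_eq _ (TI_add h1 h2)).
rewrite /QSub -qeq_addA (qeq_addA (QMul _ s)) (qeq_addC (QMul _ s)).
rewrite -/(QSub s s) qeq_subss qeq_add0; reflexivity.
Qed.

Lemma tcong_add (t t' s s' : qt) :
  tcong t t' -> tcong s s' -> tcong (QAdd t s) (QAdd t' s').
Proof.
move=> h1 h2; apply: (TI_eq _ (TI_add h1 h2)).
rewrite /QSub qeq_mulDr -!qeq_addA; apply: qeq_add; first reflexivity.
rewrite !qeq_addA (qeq_addC _ s); reflexivity.
Qed.

Lemma tcong_mul (t t' s s' : qt) :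
  tcong t t' -> tcong s s' -> tcong (QMul t s) (QMul t' s').
Proof.
move=> h1 h2; apply: (TI_eq _ (TI_add (TI_mulr s h1) (TI_mull t' h2))).
rewrite /QSub qeq_mulDl qeq_mulDr -qeq_mulA qeq_constCA.
rewrite -qeq_addA (qeq_addA (QMul _ (QMul t' s))) (qeq_addC (QMul _ (QMul t' s))).
rewrite -/(QSub (QMul t' s) (QMul t' s)) qeq_subss qeq_add0; reflexivity.
Qed.

Lemma qeval_gen (rho : nat -> 'M[F]_2) (t : qt) i j :
  qeval rho (gen t i j) = (qeval rho t i j)%:M.
Proof.
elim: t i j => [l|l a b|c|p IHp q IHq|p IHp q IHq] i j /=.
- by [].
- by rewrite mxE; case: eqP => _ //=; rewrite ?mulr1n ?mulr0n.
- by rewrite mxE; case: eqP => _ //=; rewrite ?mulr1n ?mulr0n.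
- by rewrite IHp IHq mxE raddfD.
- rewrite !IHp !IHq mxE big_ord2 -!scalar_mxM raddfD /=.
  by do 3!f_equal; apply: val_inj.
Qed.

Lemma qeval_qeq (rho : nat -> 'M[F]_2) (p q : qt) :
  qeq p q -> qeval rho p = qeval rho q.
Proof.
elim => //= {p q}.
- by move=> p q r _ -> _ ->.
- by move=> p p' q q' _ -> _ ->.
- by move=> p p' q q' _ -> _ ->.
- by move=> p q r; rewrite addrA.
- by move=> p q; rewrite addrC.
- by move=> p; rewrite raddf0 add0r.
- by move=> p q r; rewrite mulmxA.
- by move=> p; rewrite mul1mx.
- by move=> p; rewrite mulmx1.
- by move=> p; rewrite raddf0 mul0mx.
- by move=> p q r; rewrite mulmxDl.
- by move=> p q r; rewrite mulmxDr.
- by move=> a b; rewrite raddfD.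
- by move=> a b; rewrite scalar_mxM.
- by move=> a p; rewrite scalar_mxC.
- by move=> k i j p; rewrite scalar_mxC.
Qed.

Lemma qeval_subst (rho : nat -> 'M[F]_2) H (p : qt) :
  qeval rho (qsubst H p) = qeval (fun k => qeval rho (H k)) p.
Proof.
elim: p => [k|k i j|c|p IHp q IHq|p IHp q IHq] //=; rewrite ?IHp ?IHq //.
by rewrite qeval_gen.
Qed.

(* Cayley-Hamilton for 2x2 matrices, in its polarized form. *)
Lemma qeval_Q2 (rho : nat -> 'M[F]_2) : qeval rho (Q2 F) = 0.
Proof.
apply/matrixP => i j; rewrite /= !(mxE, big_ord2).
by case: (ord2P i) => ->; case: (ord2P j) => ->; rewrite /= ?mulr1n ?mulr0n; ring.
Qed.

Lemma qeval_Tideal (p : qt) : inTideal_Q2 p -> forall rho, qeval rho p = 0.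
Proof.
elim => {p} /=.
- exact: qeval_Q2.
- by move=> p q _ h1 _ h2 rho; rewrite h1 h2 addr0.
- by move=> a p _ h rho; rewrite h mulmx0.
- by move=> a p _ h rho; rewrite h mul0mx.
- by move=> p q /qeval_qeq e _ h rho; rewrite -e h.
- by move=> H p _ h rho; rewrite qeval_subst h.
Qed.

Lemma qeval_tcong (t s : qt) rho : tcong t s -> qeval rho t = qeval rho s.
Proof.
move=> /qeval_Tideal /(_ rho) /=; rewrite mul_scalar_mx scaleN1r.
by move/eqP; rewrite subr_eq0 => /eqP.
Qed.

Record Q := QC { qset : qt -> Prop; qsetP : exists t, qset = tcong t }.
HB.instance Definition _ := gen_eqMixin Q.
HB.instance Definition _ := gen_choiceMixin Q.

Definition cls (t : qt) : Q := @QC (tcong t) (ex_intro _ t erefl).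

Lemma Q_eq (a b : Q) : qset a = qset b -> a = b.
Proof.
case: a b => sa pa [sb pb] /= e; subst sb.
by rewrite (Prop_irrelevance pa pb).
Qed.

Lemma cls_eq (t s : qt) : cls t = cls s <-> tcong t s.
Proof.
split=> [e|h].
  have : qset (cls t) t by exact: tcong_refl.
  by rewrite e /=; apply: tcong_sym.
apply: Q_eq; apply: funext => u; apply: propext.
by split; [apply: tcong_trans (tcong_sym h)|apply: tcong_trans h].
Qed.

Lemma clsP (a : Q) : exists t, a = cls t.
Proof. by case: a => sa [t e]; exists t; apply: Q_eq. Qed.

Definition rep (a : Q) : qt := proj1_sig (cid (clsP a)).

Lemma repK (a : Q) : cls (rep a) = a.
Proof. by rewrite /rep; case: cid => t /= ->. Qed.

Lemma tcong_rep (t : qt) : tcong (rep (cls t)) t.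
Proof. by apply/cls_eq; rewrite repK. Qed.

Definition qzero := cls (QConst 0).
Definition qone := cls (QConst 1).
Definition qadd (a b : Q) := cls (QAdd (rep a) (rep b)).
Definition qmul (a b : Q) := cls (QMul (rep a) (rep b)).
Definition qopp (a : Q) := cls (QMul (QConst (-1)) (rep a)).

Lemma qaddE t s : qadd (cls t) (cls s) = cls (QAdd t s).
Proof. by apply/cls_eq/tcong_add; apply: tcong_rep. Qed.
Lemma qmulE t s : qmul (cls t) (cls s) = cls (QMul t s).
Proof. by apply/cls_eq/tcong_mul; apply: tcong_rep. Qed.
Lemma qoppE t : qopp (cls t) = cls (QMul (QConst (-1)) t).
Proof. by apply/cls_eq/tcong_mul; [apply: tcong_refl|apply: tcong_rep]. Qed.

(* Q is nontrivial since 1 does not vanish on matrices. *)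
Lemma qone_neq0 : qone != qzero.
Proof.
apply/eqP => /cls_eq /(qeval_tcong (fun _ => 0)) /= /matrixP /(_ ord0 ord0).
by rewrite !mxE /= mulr1n => /eqP; rewrite oner_eq0.
Qed.

Ltac qelim := repeat (let a := fresh "a" in move=> a; case: (clsP a) => ? ->).
Ltac qlaw := qelim; rewrite ?qoppE !(qaddE, qmulE); apply/cls_eq/qeq_tcong.

Lemma qaddA : associative qadd. Proof. qlaw; exact: qeq_addA. Qed.
Lemma qaddC : commutative qadd. Proof. qlaw; exact: qeq_addC. Qed.
Lemma qadd0 : left_id qzero qadd. Proof. qlaw; exact: qeq_add0. Qed.
Lemma qaddN : left_inverse qzero qopp qadd.
Proof. qlaw; rewrite qeq_addC -/(QSub _ _) qeq_subss; reflexivity. Qed.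
Lemma qmulA : associative qmul. Proof. qlaw; exact: qeq_mulA. Qed.
Lemma qmul1 : left_id qone qmul. Proof. qlaw; exact: qeq_mul1l. Qed.
Lemma qmulr1 : right_id qone qmul. Proof. qlaw; exact: qeq_mul1r. Qed.
Lemma qmulDl : left_distributive qmul qadd. Proof. qlaw; exact: qeq_mulDl. Qed.
Lemma qmulDr : right_distributive qmul qadd. Proof. qlaw; exact: qeq_mulDr. Qed.

HB.instance Definition _ := GRing.isNzRing.Build Q qaddA qaddC qadd0 qaddN
  qmulA qmul1 qmulr1 qmulDl qmulDr qone_neq0.

Lemma clsD t s : cls (QAdd t s) = cls t + cls s. Proof. by rewrite -qaddE. Qed.
Lemma clsM t s : cls (QMul t s) = cls t * cls s. Proof. by rewrite -qmulE. Qed.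
Lemma clsN1 t : cls (QMul (QConst (-1)) t) = - cls t. Proof. by rewrite -qoppE. Qed.
Lemma clsB t s : cls (QSub t s) = cls t - cls s. Proof. by rewrite clsD clsN1. Qed.

Lemma cls0P (p : qt) : cls p = 0 <-> inTideal_Q2 p.
Proof. by rewrite -tcong0; exact: cls_eq. Qed.

Definition scal (c : F) : Q := cls (QConst c).

Lemma scal_is_zmod_morphism : GRing.zmod_morphism scal.
Proof.
move=> a b; rewrite /scal -clsB; apply/cls_eq/qeq_tcong.
rewrite /QSub -qeq_constM mulN1r qeq_constD; reflexivity.
Qed.
Lemma scal_is_monoid_morphism : GRing.monoid_morphism scal.
Proof. by split => [//|a b]; rewrite /scal -clsM; apply/cls_eq/qeq_tcong/qeq_constM. Qed.
HB.instance Definition _ := GRing.isZmodMorphism.Build F Q scal scal_is_zmod_morphism.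
HB.instance Definition _ :=
  GRing.isMonoidMorphism.Build F Q scal scal_is_monoid_morphism.

Definition evalQ (rho : nat -> 'M[F]_2) (a : Q) : 'M[F]_2 := qeval rho (rep a).

Lemma evalQ_cls rho t : evalQ rho (cls t) = qeval rho t.
Proof. exact/qeval_tcong/tcong_rep. Qed.

Section EvalMorphism.
Variable rho : nat -> 'M[F]_2.
Lemma evalQ_is_zmod_morphism : GRing.zmod_morphism (evalQ rho).
Proof. by qelim; rewrite -clsB !evalQ_cls /= mul_scalar_mx scaleN1r. Qed.
Lemma evalQ_is_monoid_morphism : GRing.monoid_morphism (evalQ rho).
Proof. by split; [exact: evalQ_cls|qelim; rewrite -clsM !evalQ_cls]. Qed.
HB.instance Definition _ := GRing.isZmodMorphism.Build Q 'M[F]_2 (evalQ rho)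
  evalQ_is_zmod_morphism.
HB.instance Definition _ := GRing.isMonoidMorphism.Build Q 'M[F]_2 (evalQ rho)
  evalQ_is_monoid_morphism.
End EvalMorphism.

Fixpoint central (t : qt) : bool :=
  match t with
  | QVar _ => false
  | QEnt _ _ _ | QConst _ => true
  | QAdd p q | QMul p q => central p && central q
  end.

Lemma central_comm (c : qt) : central c -> forall z : Q, cls c * z = z * cls c.
Proof.
elim: c => [//|k i j|a|p IHp q IHq|p IHp q IHq] /= hc z;
  case: (clsP z) => s ->.
- by rewrite -!clsM; apply/cls_eq/qeq_tcong/qeq_entC.
- by rewrite -!clsM; apply/cls_eq/qeq_tcong/qeq_constC.
- by case/andP: hc => hp hq; rewrite clsD mulrDl mulrDr IHp // IHq.
- by case/andP: hc => hp hq; rewrite clsM -mulrA IHq // mulrA IHp // mulrA.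
Qed.

Lemma gen_central (t : qt) i j :
  central (gen t i j) && (two_var t ==> two_var (gen t i j)).
Proof.
elim: t i j => [l|l a b|c|p IHp q IHq|p IHp q IHq] i j //=.
- by rewrite implybb.
- by case: (i == j); rewrite /= ?implybb ?implybT.
- by case: (i == j); rewrite /= ?implybb ?implybT.
- move: (IHp i j) (IHq i j) => /andP[-> h1] /andP[-> h2] /=.
  by apply/implyP => /andP[/(implyP h1) -> /(implyP h2) ->].
- move: (IHp i ord0) (IHq ord0 j) (IHp i (@Ordinal 2 1 isT))
    (IHq (@Ordinal 2 1 isT) j) => /andP[-> h1] /andP[-> h2] /andP[-> h3] /andP[-> h4].
  apply/implyP => /andP[hp hq] /=.
  by rewrite (implyP h1 hp) (implyP h2 hq) (implyP h3 hp) (implyP h4 hq).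
Qed.

(* Classes of central quasi-polynomials in the entries of x_0 and x_1: these
   are the coefficients of the normal form. *)
Definition coef2 (z : Q) := exists c, [/\ central c, two_var c & z = cls c].

Lemma coef2_comm z w : coef2 z -> z * w = w * z.
Proof. by case=> c [hc _ ->]; apply: central_comm. Qed.

Lemma coef2_commA z w u : coef2 z -> w * (z * u) = z * (w * u).
Proof. by move=> h; rewrite mulrA -(coef2_comm w h) mulrA. Qed.

Lemma coef2D z w : coef2 z -> coef2 w -> coef2 (z + w).
Proof.
case=> c [h1 h2 ->] [d [h3 h4 ->]].
by exists (QAdd c d); rewrite /= h1 h2 h3 h4 clsD.
Qed.

Lemma coef2M z w : coef2 z -> coef2 w -> coef2 (z * w).
Proof.
case=> c [h1 h2 ->] [d [h3 h4 ->]].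
by exists (QMul c d); rewrite /= h1 h2 h3 h4 clsM.
Qed.

Lemma coef2_scal c : coef2 (scal c).
Proof. by exists (QConst c). Qed.

Lemma coef2N z : coef2 z -> coef2 (- z).
Proof. by move=> h; rewrite -mulN1r -(rmorphN1 scal); apply/coef2M/h/coef2_scal. Qed.

Lemma coef2_gen t i j : two_var t -> coef2 (cls (gen t i j)).
Proof.
move=> h; case/andP: (gen_central t i j) => h1 /implyP h2.
by exists (gen t i j); split => //; apply: h2.
Qed.

Lemma coef2_tr t : two_var t -> coef2 (cls (qtr t)).
Proof. by move=> h; rewrite /qtr clsD; apply: coef2D; apply: coef2_gen. Qed.

Lemma CH_Q (a b : qt) :
  cls a * cls b + cls b * cls a = cls (qtr a) * cls b + cls (qtr b) * cls a
    - cls (qtr a) * cls (qtr b) + cls (qtr (QMul a b)).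
Proof.
pose ab k := if k == 0%N then a else b.
have /cls0P : inTideal_Q2 (QSub (QAdd (QSub (QSub (QAdd (QMul a b) (QMul b a))
    (QMul (qtr a) b)) (QMul (qtr b) a)) (QMul (qtr a) (qtr b))) (qtr (QMul a b))).
  exact (TI_subst ab (TI_gen F)).
by rewrite !(clsB, clsD, clsM); apply: subr_solve.
Qed.

End TIdeal.

Section NormalForm.
Variable F : fieldType.
Hypothesis charF0 : [pchar F] =i pred0.
Local Notation qt := (qterm F).
Local Notation x := (cls (QVar 0 : qt)).
Local Notation y := (cls (QVar 1 : qt)).

Lemma halveK (w : Q F) : scal (2%:R^-1 : F) * (w + w) = w.
Proof.
have h2 : (2%:R : F) != 0 by rewrite (pcharf0P _).1.
have e : (2%:R^-1 + 2%:R^-1 : F) = 1 by field.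
by rewrite mulrDr -mulrDl -rmorphD e rmorph1 mul1r.
Qed.

(* z^2 = tr(z) z - det(z), where det(z) = (tr(z)^2 - tr(z^2))/2 is central. *)
Lemma square_form (Z : qt) : two_var Z ->
  exists2 d, coef2 d & cls Z * cls Z = cls (qtr Z) * cls Z + d.
Proof.
move=> hZ; have hZZ : two_var (QMul Z Z) by rewrite /= hZ.
set z := cls Z; set tz := cls (qtr Z); set T := cls (qtr (QMul Z Z)).
exists (scal (2%:R^-1 : F) * (T - tz * tz)).
  apply: coef2M; first exact: coef2_scal.
  by apply: coef2D; [exact: coef2_tr|apply/coef2N/coef2M; exact: coef2_tr].
rewrite -{1}(halveK (z * z)) CH_Q -/z -/tz -/T -[X in _ = X + _](halveK (tz * z)).
by rewrite -[RHS]mulrDr -addrA (addrC (- _)).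
Qed.

Definition in_span (s : Q F) := exists a b c d,
  [/\ coef2 a, coef2 b, coef2 c, coef2 d & s = a + b * x + c * y + d * (x * y)].

Lemma span_add s t : in_span s -> in_span t -> in_span (s + t).
Proof.
case=> [a [b [c [d [ha hb hc hd ->]]]]] [a' [b' [c' [d' [ha' hb' hc' hd' ->]]]]].
exists (a + a'), (b + b'), (c + c'), (d + d'); split; try exact: coef2D.
by rewrite !mulrDl (addrACA (_ + _ + _)) (addrACA (a + _)) (addrACA a).
Qed.

Lemma span_cmul z s : coef2 z -> in_span s -> in_span (z * s).
Proof.
move=> hz [a [b [c [d [ha hb hc hd ->]]]]].
exists (z * a), (z * b), (z * c), (z * d); split; try exact: coef2M.
by rewrite !mulrDr !mulrA.
Qed.

Lemma span_opp s : in_span s -> in_span (- s).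
Proof. by rewrite -mulN1r -(rmorphN1 (@scal F)); apply/span_cmul/coef2_scal. Qed.

Lemma span_sub s t : in_span s -> in_span t -> in_span (s - t).
Proof. by move=> hs /span_opp; apply: span_add. Qed.

Lemma span_basis a b c d : coef2 a -> coef2 b -> coef2 c -> coef2 d ->
  in_span (a + b * x + c * y + d * (x * y)).
Proof. by exists a, b, c, d. Qed.

Let c0 := coef2_scal (0 : F).
Let c1 := coef2_scal (1 : F).

Lemma span_coef z : coef2 z -> in_span z.
Proof.
move=> hz; have := span_basis hz c0 c0 c0.
by rewrite rmorph0 !mul0r !addr0.
Qed.

Lemma span_x : in_span x.
Proof.
by have := span_basis c0 c1 c0 c0;
  rewrite rmorph0 rmorph1 !mul0r mul1r add0r !addr0.
Qed.

Lemma span_y : in_span y.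
Proof.
by have := span_basis c0 c0 c1 c0;
  rewrite rmorph0 rmorph1 !mul0r mul1r !add0r addr0.
Qed.

Lemma span_xy : in_span (x * y).
Proof.
by have := span_basis c0 c0 c0 c1;
  rewrite rmorph0 rmorph1 !mul0r mul1r !add0r.
Qed.

(* Left multiplication by u preserves the span as soon as it maps the
   basis 1, x, y, xy into it, since u commutes with central coefficients. *)
Lemma span_lmul u : in_span u -> in_span (u * x) -> in_span (u * y) ->
  in_span (u * (x * y)) -> forall s, in_span s -> in_span (u * s).
Proof.
move=> h1 hx hy hxy s [a [b [c [d [ha hb hc hd ->]]]]].
rewrite !mulrDr -(coef2_comm u ha) (coef2_commA _ _ hb) (coef2_commA _ _ hc).
rewrite (coef2_commA _ _ hd).
by do 3?apply: span_add; apply: span_cmul.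
Qed.

(* Closure under left multiplication by x uses x^2 = tr(x) x - det(x). *)
Lemma span_lmulx s : in_span s -> in_span (x * s).
Proof.
have [d hd exx] := square_form (isT : two_var (QVar 0 : qt)).
move: s; apply: span_lmul span_x _ span_xy _.
  by rewrite exx; apply: span_add (span_coef hd); apply/span_cmul/span_x/coef2_tr.
rewrite mulrA exx mulrDl -mulrA; apply: span_add.
  exact/span_cmul/span_xy/coef2_tr.
exact/span_cmul/span_y.
Qed.

(* For y we also rewrite yx = -xy + tr(x) y + tr(y) x + central, from the
   polarized Cayley-Hamilton relation. *)
Lemma span_lmuly s : in_span s -> in_span (y * s).
Proof.
have [d hd eyy] := square_form (isT : two_var (QVar 1 : qt)).
have ct0 := coef2_tr (isT : two_var (QVar 0 : qt)).
have ct1 := coef2_tr (isT : two_var (QVar 1 : qt)).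
have ct01 := coef2_tr (isT : two_var (QMul (QVar 0) (QVar 1) : qt)).
have eyx : y * x = cls (qtr (QVar 0)) * y + cls (qtr (QVar 1)) * x
    - cls (qtr (QVar 0)) * cls (qtr (QVar 1)) + cls (qtr (QMul (QVar 0) (QVar 1)))
    - x * y by rewrite -CH_Q (addrC (x * y)) addrK.
have hyy : in_span (y * y).
  by rewrite eyy; apply: span_add (span_coef hd); apply: span_cmul span_y.
move: s; apply: (span_lmul span_y _ hyy).
  rewrite eyx; apply: span_sub span_xy; apply: span_add; last exact: span_coef.
  apply: span_sub; last exact/span_coef/coef2M.
  by apply: span_add; [exact: span_cmul ct0 span_y|exact: span_cmul ct1 span_x].
rewrite mulrA eyx !(mulrBl, mulrDl) -!mulrA.
apply: span_sub (span_lmulx hyy); apply: span_add; last exact: span_cmul ct01 span_y.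
apply: span_sub; last exact: span_cmul ct0 (span_cmul ct1 span_y).
by apply: span_add; [exact: span_cmul ct0 hyy|exact: span_cmul ct1 span_xy].
Qed.

Lemma span_lmul_cls (t : qt) : two_var t -> forall s, in_span s -> in_span (cls t * s).
Proof.
elim: t => [k|k i j|c|p IHp q IHq|p IHp q IHq] /= ht s hs.
- by case: k ht => [|[|//]] _; [exact: span_lmulx|exact: span_lmuly].
- by apply: span_cmul hs; exists (QEnt k i j).
- exact/span_cmul/hs/coef2_scal.
- case/andP: ht => hp hq; rewrite clsD mulrDl.
  by apply: span_add; [exact: IHp|exact: IHq].
- by case/andP: ht => hp hq; rewrite clsM -mulrA; apply: IHp => //; exact: IHq.
Qed.

Lemma normal_form (t : qt) : two_var t -> in_span (cls t).
Proof.
move=> ht; rewrite -[cls t]mulr1 -(rmorph1 (@scal F)).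
exact: span_lmul_cls ht _ (span_coef c1).
Qed.

End NormalForm.

Section IteratedPolynomials.
Variable R : idomainType.

(* Commutative polynomials R[t_0, ..., t_{n-1}], as iterated univariate
   polynomial rings whose outermost variable is t_{n-1}. *)
Fixpoint mpol (n : nat) : idomainType :=
  match n with 0 => R | n'.+1 => {poly mpol n'} end.

Fixpoint pvar (n k : nat) : mpol n :=
  match n return mpol n with
  | 0 => 0
  | n'.+1 => if k == n' then 'X else (pvar n' k)%:P
  end.

Fixpoint pconst (n : nat) (c : R) : mpol n :=
  match n return mpol n with
  | 0 => c
  | n'.+1 => (pconst n' c)%:P
  end.

Section Evaluation.
Variables (S : nzRingType) (f : {rmorphism R -> S}) (v : nat -> S).
Hypothesis v_central : forall k z, GRing.comm (v k) z.

(* The ring morphism extending f by t_k |-> v k; it exists because the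
   values v k are central in S. *)
Fixpoint peval (n : nat) : {rmorphism mpol n -> S} :=
  match n return {rmorphism mpol n -> S} with
  | 0 => f
  | n'.+1 => horner_morph (fun p => v_central n' (peval n' p))
  end.

Lemma peval_var n k : (k < n)%N -> peval n (pvar n k) = v k.
Proof.
elim: n => [//|n IH] hk /=; rewrite /horner_morph; case: eqP => [->|ne].
  by rewrite map_polyX hornerX.
rewrite map_polyC hornerC; apply: IH.
by move: hk; rewrite ltnS leq_eqVlt => /orP[/eqP|].
Qed.

Lemma peval_const n c : peval n (pconst n c) = f c.
Proof. by elim: n => //= n IH; rewrite /horner_morph map_polyC hornerC. Qed.

End Evaluation.

Definition pev (v : nat -> R) (n : nat) : {rmorphism mpol n -> R} :=
  peval (idfun : {rmorphism R -> R}) (fun k z => mulrC (v k) z) n.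

Lemma pev_var v n k : (k < n)%N -> pev v n (pvar n k) = v k.
Proof. exact: peval_var. Qed.

Lemma pev_const v n c : pev v n (pconst n c) = c.
Proof. exact: peval_const. Qed.

Lemma pev_ext n v w : (forall k, (k < n)%N -> v k = w k) ->
  forall p, pev v n p = pev w n p.
Proof.
elim: n => [//|n IH] h p /=; rewrite /horner_morph h //.
by congr (_.[_]); apply: eq_map_poly => q; apply: IH => k hk; apply/h/ltnW.
Qed.

Hypothesis charR0 : [pchar R] =i pred0.

(* In characteristic 0 a univariate polynomial vanishing at every point is 0,
   since the naturals 0, ..., size q - 1 are distinct roots. *)
Lemma poly_vanish (q : {poly R}) : (forall t, q.[t] = 0) -> q = 0.
Proof.
move=> h; apply/eqP/negPn/negP => nz.
set rs := [seq i%:R | i <- iota 0 (size q)] : seq R.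
have hr : all (root q) rs by apply/allP => _ /mapP [i _ ->]; apply/rootP.
have hu : uniq rs.
  rewrite map_inj_uniq ?iota_uniq // => i j /eqP; rewrite -subr_eq0.
  have [lij|lji] := leqP i j.
    rewrite -opprB -natrB // oppr_eq0 (pcharf0P _).1 // subn_eq0 => hji.
    by apply/eqP; rewrite eqn_leq lij hji.
  by rewrite -natrB ?(ltnW lji) // (pcharf0P _).1 // subn_eq0 leqNgt lji.
by have := max_poly_roots nz hr hu; rewrite size_map size_iota ltnn.
Qed.

Lemma mpol_vanish n (p : mpol n) : (forall v, pev v n p = 0) -> p = 0.
Proof.
elim: n p => [|n IH] p h; first exact: (h (fun _ => 0)).
apply/polyP => k; rewrite coef0; apply: IH => v.
pose w t m := if m == n then t else v m.
have hq : map_poly (pev v n) p = 0.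
  apply: poly_vanish => t.
  have <- : map_poly (pev (w t) n) p = map_poly (pev v n) p.
    by apply: eq_map_poly; apply: pev_ext => m hm; rewrite /w (ltn_eqF hm).
  by have := h (w t); rewrite /= /horner_morph /w eqxx.
by have := congr1 (fun r : {poly R} => r`_k) hq; rewrite coef_map coef0.
Qed.

Lemma mpol_cancel n (d p : mpol n) : (forall v, pev v n d * pev v n p = 0) ->
  (exists v, pev v n d != 0) -> p = 0.
Proof.
move=> h [v0 hv0]; have : d * p = 0 by apply: mpol_vanish => v; rewrite rmorphM h.
move/eqP; rewrite mulf_eq0 => /orP [/eqP e|/eqP //].
by move: hv0; rewrite e rmorph0 eqxx.
Qed.

End IteratedPolynomials.

(* Unfolding these produces huge polynomial terms; they are handled through
   their evaluation lemmas instead. *)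
Arguments pvar : simpl never.
Arguments pconst : simpl never.
Arguments pev : simpl never.

Section Coefficients.
Variable F : fieldType.
Local Notation qt := (qterm F).

(* The polynomial variable t_{4k+2i+j} stands for the entry x^{(k)}_{ij}. *)
Definition ent_index (k : nat) (i j : 'I_2) : nat := 4 * k + 2 * i + j.

Definition ent (m : nat) : Q F :=
  cls (QEnt (m %/ 4) (inord ((m %/ 2) %% 2)) (inord (m %% 2)) : qt).

Lemma ent_indexP k i j : (k < 2)%N ->
  (ent_index k i j < 8)%N /\ ent (ent_index k i j) = cls (QEnt k i j).
Proof.
rewrite /ent /ent_index; case: k => [|[|//]] _;
  by case: (ord2P i) => ->; case: (ord2P j) => ->; split => //;
     congr (cls (QEnt _ _ _)); apply: val_inj; rewrite /= inordK.
Qed.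

Lemma ent_central m z : GRing.comm (ent m) z.
Proof. exact: central_comm. Qed.

(* The ring morphism R[t_0, ..., t_7] -> Q sending t_m to the corresponding
   entry of x_0 or x_1; the entries are central, so it exists. *)
Definition Phi : {rmorphism mpol F 8 -> Q F} :=
  peval (@scal F) ent_central 8.

Lemma Phi_var m : (m < 8)%N -> Phi (pvar F 8 m) = ent m.
Proof. exact: (peval_var (@scal F) ent_central). Qed.

Lemma Phi_const c : Phi (pconst 8 c) = scal c.
Proof. exact: (peval_const (@scal F) ent_central). Qed.

Fixpoint pol (t : qt) : mpol F 8 :=
  match t with
  | QVar _ => 0
  | QEnt k i j => pvar F 8 (ent_index k i j)
  | QConst c => pconst 8 c
  | QAdd p q => pol p + pol q
  | QMul p q => pol p * pol q
  end.

Lemma cls_pol (t : qt) : central t -> two_var t -> cls t = Phi (pol t).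
Proof.
elim: t => [//|k i j|c|p IHp q IHq|p IHp q IHq] /= hc ht.
- by have [lt8 <-] := ent_indexP i j ht; rewrite Phi_var.
- by rewrite Phi_const.
- by case/andP: hc => ? ?; case/andP: ht => ? ?; rewrite clsD rmorphD IHp // IHq.
- by case/andP: hc => ? ?; case/andP: ht => ? ?; rewrite clsM rmorphM IHp // IHq.
Qed.

Definition gmx (v : nat -> F) (k : nat) : 'M[F]_2 :=
  \matrix_(i, j) v (ent_index k i j).

Definition genv (v : nat -> F) : nat -> 'M[F]_2 := env2 (gmx v 0) (gmx v 1).

Lemma qeval_pol v (t : qt) : central t -> two_var t ->
  qeval (genv v) t = (pev v 8 (pol t))%:M.
Proof.
elim: t => [//|k i j|c|p IHp q IHq|p IHp q IHq] hc ht.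
- have [lt8 _] := ent_indexP i j ht; rewrite pev_var //.
  by case: k ht {lt8 hc} => [|[|//]] _; rewrite /= mxE.
- by rewrite pev_const.
- case/andP: hc => ? ?; case/andP: ht => ? ?.
  rewrite -[qeval _ _]/(qeval (genv v) p + qeval (genv v) q) IHp // IHq //.
  by rewrite -[pol (QAdd p q)]/(pol p + pol q) rmorphD raddfD.
- case/andP: hc => ? ?; case/andP: ht => ? ?.
  rewrite -[qeval _ _]/(qeval (genv v) p *m qeval (genv v) q) IHp // IHq //.
  by rewrite -[pol (QMul p q)]/(pol p * pol q) rmorphM scalar_mxM.
Qed.

Lemma coef2_poly (z : Q F) : coef2 z ->
  exists p, z = Phi p /\ forall v, evalQ (genv v) z = (pev v 8 p)%:M.
Proof.
case=> c [hc ht ->]; exists (pol c); split; first exact: cls_pol.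
by move=> v; rewrite evalQ_cls qeval_pol.
Qed.

End Coefficients.

(* Linear independence of 1, A, B, AB for A = (a b; c d), B = (e f; g h):
   the entries of al + be A + ga B + de AB = 0 successively force de, ga, be
   and al to vanish, up to explicit polynomial factors in the entries. *)
Section Elimination.
Variable R : comRingType.
Variables al be ga de a b c d e f g h : R.
Hypotheses (h11 : al + be * a + ga * e + de * (a * e + b * g) = 0)
           (h12 : be * b + ga * f + de * (a * f + b * h) = 0)
           (h21 : be * c + ga * g + de * (c * e + d * g) = 0)
           (h22 : al + be * d + ga * h + de * (c * f + d * h) = 0).

Lemma elim_coef_AB :
  b * ((c * f - b * g) ^+ 2 + (b * (h - e) - f * (d - a))
        * (c * e + d * g - a * g - c * h)) * de = 0.
Proof.
have -> : b * ((c * f - b * g) ^+ 2 + (b * (h - e) - f * (d - a))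
        * (c * e + d * g - a * g - c * h)) * de =
  (c * f - b * g) * (b * ((al + be * d + ga * h + de * (c * f + d * h))
                          - (al + be * a + ga * e + de * (a * e + b * g)))
                     - (d - a) * (be * b + ga * f + de * (a * f + b * h)))
  + (b * (h - e) - f * (d - a)) * (b * (be * c + ga * g + de * (c * e + d * g))
                                   - c * (be * b + ga * f + de * (a * f + b * h))).
  by ring.
by rewrite h11 h12 h21 h22; ring.
Qed.

Lemma elim_coef_B : de = 0 -> (c * f - b * g) * ga = 0.
Proof.
move=> de0; have -> : (c * f - b * g) * ga =
  c * (be * b + ga * f + de * (a * f + b * h))
  - b * (be * c + ga * g + de * (c * e + d * g))
  + de * (b * (c * e + d * g) - c * (a * f + b * h)) by ring.
by rewrite h12 h21 de0; ring.
Qed.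

Lemma elim_coef_A : de = 0 -> ga = 0 -> b * be = 0.
Proof. by move=> de0 ga0; move: h12; rewrite de0 ga0 !mul0r !addr0 mulrC. Qed.

Lemma elim_coef_1 : de = 0 -> ga = 0 -> be = 0 -> al = 0.
Proof. by move=> de0 ga0 be0; move: h11; rewrite de0 ga0 be0 !mul0r !addr0. Qed.

End Elimination.

Section GenericMatrices.
Variable F : fieldType.
Hypothesis charF0 : [pchar F] =i pred0.

Lemma generic_entries (v : nat -> F) (al be ga de : F) :
  al%:M + be%:M *m gmx v 0 + ga%:M *m gmx v 1 + de%:M *m (gmx v 0 *m gmx v 1) = 0 ->
  [/\ al + be * v 0%N + ga * v 4%N + de * (v 0%N * v 4%N + v 1%N * v 6%N) = 0,
      be * v 1%N + ga * v 5%N + de * (v 0%N * v 5%N + v 1%N * v 7%N) = 0,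
      be * v 2%N + ga * v 6%N + de * (v 2%N * v 4%N + v 3%N * v 6%N) = 0 &
      al + be * v 3%N + ga * v 7%N + de * (v 2%N * v 5%N + v 3%N * v 7%N) = 0].
Proof.
move=> /matrixP h.
move: (h ord0 ord0) (h ord0 (@Ordinal 2 1 isT)) (h (@Ordinal 2 1 isT) ord0)
  (h (@Ordinal 2 1 isT) (@Ordinal 2 1 isT)).
rewrite !mxE !big_ord2 !mxE /= !big_ord2 !mxE /= ?mulr1n ?mulr0n => e11 e12 e21 e22.
by split; [rewrite -e11|rewrite -e12|rewrite -e21|rewrite -e22]; ring.
Qed.

Lemma generic_independence (al be ga de : mpol F 8) :
  (forall v, (pev v 8 al)%:M + (pev v 8 be)%:M *m gmx v 0 + (pev v 8 ga)%:M *m gmx v 1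
             + (pev v 8 de)%:M *m (gmx v 0 *m gmx v 1) = 0) ->
  [/\ al = 0, be = 0, ga = 0 & de = 0].
Proof.
move=> /(_ _) /generic_entries E.
(* The variables are kept abstract: closed polynomial terms must not be
   unfolded by the unifier. *)
pose t k := pvar F 8 k; have tE v k : (k < 8)%N -> pev v 8 (t k) = v k.
  exact: pev_var.
clearbody t; have pevE := (rmorphM, rmorphB, rmorphD, rmorphXn, tE).
(* At A = (0 1; 1 0), B = (0 0; 1 0) the elimination factors are nonzero. *)
pose w (k : nat) : F := if (k == 1) || (k == 2) || (k == 6) then 1 else 0.
have de0 : de = 0.
  apply: (mpol_cancel charF0 (d := t 1 * ((t 2 * t 5 - t 1 * t 6) ^+ 2
      + (t 1 * (t 7 - t 4) - t 5 * (t 3 - t 0))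
        * (t 2 * t 4 + t 3 * t 6 - t 0 * t 6 - t 2 * t 7)))).
    by move=> v; rewrite !pevE //; case: (E v); apply: elim_coef_AB.
  exists w; rewrite !pevE // /w /=.
  rewrite !(mul1r, mulr1, mul0r, mulr0, subrr, sub0r, subr0, add0r, addr0).
  by rewrite sqrrN expr1n oner_eq0.
have ga0 : ga = 0.
  apply: (mpol_cancel charF0 (d := t 2 * t 5 - t 1 * t 6)).
    move=> v; rewrite !pevE //; case: (E v) => _ h12 h21 _.
    by apply: (elim_coef_B h12 h21); rewrite de0 rmorph0.
  by exists w; rewrite !pevE // /w /= !(mul1r, mul0r, sub0r) oppr_eq0 oner_eq0.
have be0 : be = 0.
  apply: (mpol_cancel charF0 (d := t 1)); last by exists w; rewrite tE // /w oner_eq0.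
  move=> v; rewrite tE //; case: (E v) => _ h12 _ _.
  by apply: (elim_coef_A h12); rewrite ?de0 ?ga0 rmorph0.
split=> //; apply: (mpol_vanish charF0) => v; case: (E v) => h11 _ _ _.
by apply: (elim_coef_1 h11); rewrite ?de0 ?ga0 ?be0 rmorph0.
Qed.

Lemma span_quasi_identity (s : Q F) : in_span s ->
  (forall A B, evalQ (env2 A B) s = 0) -> s = 0.
Proof.
case=> [a [b [c [d [ha hb hc hd ->]]]]] hs.
have [pa [Ea ea]] := coef2_poly ha; have [pb [Eb eb]] := coef2_poly hb.
have [pc [Ec ec]] := coef2_poly hc; have [pd [Ed ed]] := coef2_poly hd.
have [pa0 pb0 pc0 pd0] : [/\ pa = 0, pb = 0, pc = 0 & pd = 0].
  apply: generic_independence => v; have := hs (gmx v 0) (gmx v 1).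
  by rewrite -/(genv v) !rmorphD !rmorphM /= ea eb ec ed !evalQ_cls.
by rewrite Ea Eb Ec Ed pa0 pb0 pc0 pd0 !rmorph0 !mul0r !addr0.
Qed.

End GenericMatrices.

Theorem mainTheorem17 (F : fieldType) (charF0 : [pchar F] =i pred0)
  (P : qterm F) :
  two_var P -> quasi_identity2 P -> inTideal_Q2 P.
Proof.
move=> hP hq; apply/cls0P.
apply: (span_quasi_identity charF0 (normal_form charF0 hP)) => A B.
by rewrite evalQ_cls hq.
Qed.
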